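(* Assume SIEVE$(S,k,i,r)$ returns $R\cap X^+$ with $R\sim\mathcal{U}(X)$ and $|X|=k$ (i.e. it returns after the while loop, once dummy elements have been added so that $|X|=k$, with $X^+=\{a\in X:\Delta(a,S,X)\ge0\}$). Then for any $T\subseteq X^+$, $$\mathbb{E}_{R\sim\mathcal{U}(X)}[f_S(R\cap X^+)]\ge f_S(T)/r.$$
   Context: $N$ is a ground set, $f:2^N\to\mathbb{R}_{\ge0}$ is non-negative submodular (not necessarily monotone), $k$ is a cardinality constraint, $\texttt{OPT}=\max_{|S|\le k} f(S)$, $r$ is such that $k/r$ is a positive integer. $f_S(T) = f(S\cup T)-f(S)$, $f_S(a) = f_S(\{a\})$. A dummy element $a$ satisfies $f_S(a)=0$ for all $S$. $\mathcal{U}(X)$ is the uniform distribution over subsets of $X$ of size exactly $k/r$, and $\Delta(a,S,X) := \mathbb{E}_{R\sim\mathcal{U}(X)}[f_{S\cup(R\setminus\{a\})}(a)]$. SIEVE$(S,k,i,r)$ (idealized, with parameter $\epsilon>0$, exact $\texttt{OPT}$ and exact expectations): $X\leftarrow N$, $t \leftarrow \frac{1-\epsilon/2}{2}((1-1/r)^{i-1}(1-\epsilon/2)\texttt{OPT} - f(S))$; while $|X|>k$: $X^+\leftarrow\{a\in X:\Delta(a,S,X)\ge0\}$; if $\mathbb{E}_{R\sim\mathcal{U}(X)}[f_S(R\cap X^+)]\ge t/r$ return $R\cap X^+$ with $R\sim\mathcal{U}(X)$; else $X\leftarrow\{a\in X:\Delta(a,S,X)\ge(1+\epsilon/4)t/k\}$.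 After the loop: add $k-|X|$ dummy elements to $X$, set $X^+\leftarrow\{a\in X:\Delta(a,S,X)\ge0\}$, return $R\cap X^+$ with $R\sim\mathcal{U}(X)$. *)

From mathcomp Require Import all_boot all_order all_algebra.
Set Implicit Arguments. Unset Strict Implicit. Unset Printing Implicit Defensive.
Import Order.TTheory GRing.Theory Num.Theory.
Local Open Scope ring_scope.

Section Defs.
Variables (R : realFieldType) (T : finType).

Definition nonneg_setfun (f : {set T} -> R) : Prop := forall A, 0 <= f A.

Definition submodular (f : {set T} -> R) : Prop :=
  forall A B : {set T}, f (A :|: B) + f (A :&: B) <= f A + f B.

Definition marg (f : {set T} -> R) (S A : {set T}) : R := f (S :|: A) - f S.

(* The support of U(X): subsets of X of size exactly s (s = k/r). *)
Definition usets (X : {set T}) (s : nat) : {set {set T}} :=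
  [set Rs : {set T} | (Rs \subset X) && (#|Rs| == s)].

Definition unif_exp (X : {set T}) (s : nat) (g : {set T} -> R) : R :=
  (\sum_(Rs in usets X s) g Rs) / (#|usets X s|)%:R.

Definition Delta (f : {set T} -> R) (S X : {set T}) (s : nat) (a : T) : R :=
  unif_exp X s (fun Rs => marg f (S :|: (Rs :\ a)) [set a]).

Definition Xplus (f : {set T} -> R) (S X : {set T}) (s : nat) : {set T} :=
  [set a in X | 0 <= Delta f S X s a].

End Defs.

From mathcomp Require Import all_boot all_order all_algebra perm.
From mathcomp Require Import ring lra.
Import Order.TTheory GRing.Theory Num.Theory.
Set Implicit Arguments. Unset Strict Implicit.
Local Open Scope ring_scope.

(** For a sample [R], split [R :&: X+] into [R :&: T] and the rest. By
submodularity every [q] of [X+ :\: T] in [R] adds at least [f_{S u (R \ q)}(q)],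
and summed over the samples these contributions are non-negative: [Delta(q) >= 0]
says so for the whole sum, and the samples avoiding [q] contribute at most
[(k - s)/s] times as much as those containing it, since trading an element of
the sample for [q] only shrinks the base set. Finally every element of [X]
lies in the same fraction [s/k = 1/r] of the samples, and submodularity
spreads [f_S(T)] over [R :&: T] accordingly. *)

Section UniformSets.
Variables (R : realFieldType) (T : finType) (X : {set T}) (s : nat).
Local Notation U := (usets X s).

Lemma usetsP (Rs : {set T}) : reflect (Rs \subset X /\ #|Rs| = s) (Rs \in U).
Proof. by rewrite inE; apply: (iffP andP) => -[-> /eqP]. Qed.

Definition swapset (a b : T) (Rs : {set T}) : {set T} := tperm a b @^-1: Rs.

Lemma swapsetK a b : involutive (swapset a b).
Proof. by move=> Rs; apply/setP => x; rewrite !inE tpermK. Qed.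

Lemma mem_swapsetL a b (Rs : {set T}) : (a \in swapset a b Rs) = (b \in Rs).
Proof. by rewrite inE tpermL. Qed.

Lemma mem_swapsetR a b (Rs : {set T}) : (b \in swapset a b Rs) = (a \in Rs).
Proof. by rewrite inE tpermR. Qed.

Lemma swapset_usets a b (Rs : {set T}) : a \in X -> b \in X ->
  (swapset a b Rs \in U) = (Rs \in U).
Proof.
move=> aX bX.
have swap_sub (A : {set T}) : A \subset X -> swapset a b A \subset X.
  by move=> AX; apply/subsetP => x; rewrite inE => /(subsetP AX); case: tpermP => [->|->|].
rewrite !inE card_preimset; last exact: perm_inj.
case: (boolP (Rs \subset X)) => [/swap_sub -> //| RX].
by apply/negbTE/negP => /andP [/swap_sub]; rewrite swapsetK (negbTE RX).
Qed.

Lemma eq_usets_count_mem a b : a \in X -> b \in X ->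
  \sum_(Rs in U | a \in Rs) 1 = \sum_(Rs in U | b \in Rs) 1 :> R.
Proof.
move=> aX bX; rewrite (reindex_inj (can_inj (swapsetK a b))) /=.
by apply: eq_bigl => Rs; rewrite swapset_usets // mem_swapsetL.
Qed.

Lemma usets_count_mem a : a \in X ->
  \sum_(Rs in U | a \in Rs) 1 = #|U|%:R * s%:R / #|X|%:R :> R.
Proof.
move=> aX; have X0 : #|X|%:R != 0 :> R by rewrite pnatr_eq0 -lt0n; apply/card_gt0P; exists a.
apply: (canRL (mulfK X0)); rewrite mulrC.
transitivity (\sum_(x in X) \sum_(Rs in U | x \in Rs) 1 : R).
  by rewrite mulr_natl -sumr_const; apply: eq_bigr => x xX; rewrite (eq_usets_count_mem xX aX).
rewrite (exchange_big_dep (mem U)) /=; last by move=> x Rs _ /andP [].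
rewrite mulr_natl -sumr_const; apply: eq_bigr => Rs RU.
have [RX cRs] := usetsP _ RU.
rewrite -[in RHS]cRs -sumr_const; apply: eq_bigl => x; rewrite RU andbC.
by case: (boolP (x \in Rs)) => // /(subsetP RX).
Qed.

Lemma usets_swap_sum (F : {set T} -> R) a b : a \in X -> b \in X -> b != a ->
  \sum_(Rs in U | (a \notin Rs) && (b \in Rs)) F (Rs :\ b) =
  \sum_(Rs in U | (a \in Rs) && (b \notin Rs)) F (Rs :\ a).
Proof.
move=> aX bX ba; rewrite [RHS](reindex_inj (can_inj (swapsetK a b))) /=.
apply: eq_big => [Rs | Rs /and3P [_ aR bR]].
  by rewrite swapset_usets // mem_swapsetL mem_swapsetR (andbC (b \in Rs)).
congr F; apply/setP => x; rewrite !inE.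
by case: tpermP => [->|->|/eqP/negbTE -> /eqP/negbTE ->]; rewrite ?eqxx ?(negbTE aR) ?andbF.
Qed.

Lemma usets_exchange (F : {set T} -> R) a : a \in X ->
  \sum_(Rs in U | a \notin Rs) \sum_(b in Rs) F (Rs :\ b) =
  (#|X| - s)%:R * \sum_(Rs in U | a \in Rs) F (Rs :\ a).
Proof.
move=> aX.
have -> : (#|X| - s)%:R * \sum_(Rs in U | a \in Rs) F (Rs :\ a) =
          \sum_(Rs in U | a \in Rs) \sum_(b in X :\: Rs) F (Rs :\ a).
  rewrite mulr_sumr; apply: eq_bigr => Rs /andP [/usetsP [RX cRs] _].
  by rewrite sumr_const cardsD (setIidPr RX) cRs mulr_natl.
rewrite (exchange_big_dep (mem X)) /=; last by move=> Rs b /andP [/usetsP [RX _] _] /(subsetP RX).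
rewrite [RHS](exchange_big_dep (mem X)) /=; last by move=> Rs b _; rewrite inE => /andP [].
apply: eq_bigr => b bX; have [->|ba] := eqVneq b a.
  by rewrite !big_pred0 // => Rs; rewrite !inE; case: (a \in Rs); rewrite ?andbF.
rewrite -(eq_bigl _ _ (fun Rs => andbA _ _ _)) (usets_swap_sum _ aX bX ba).
by apply: eq_bigl => Rs; rewrite !inE bX andbT andbA.
Qed.

Lemma usets_mem_sum_ge0 (H : {set T} -> R) a : a \in X -> (s <= #|X|)%N ->
  (forall (Rs : {set T}) b, a \notin Rs -> b \in Rs -> H Rs <= H (Rs :\ b)) ->
  0 <= \sum_(Rs in U) H (Rs :\ a) -> 0 <= \sum_(Rs in U | a \in Rs) H (Rs :\ a).
Proof.
move=> aX sX H_anti; rewrite (bigID (fun Rs : {set T} => a \in Rs)) /=.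
set In := \sum_(Rs in U | a \in Rs) _; set Out := \sum_(Rs in U | a \notin Rs) _ => sum_ge0.
have Out_le : s%:R * Out <= (#|X| - s)%:R * In.
  rewrite -usets_exchange // mulr_sumr; apply: ler_sum => Rs /andP [/usetsP [_ cRs] aR].
  have -> : Rs :\ a = Rs by apply/setDidPl; rewrite disjoint_sym disjoints1.
  by rewrite -[in X in X * _]cRs mulr_natl -sumr_const; apply: ler_sum => b; apply: H_anti.
have X_gt0 : 0 < #|X|%:R :> R by rewrite ltr0n; apply/card_gt0P; exists a.
have s_ge0 : 0 <= s%:R :> R by [].
(* #|X| In = s (In + Out) + ((#|X| - s) In - s Out) *)
rewrite natrB // in Out_le; nra.
Qed.

Lemma ge0_unif_exp (g : {set T} -> R) :
  (0 <= unif_exp X s g) = (0 <= \sum_(Rs in U) g Rs).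
Proof.
rewrite /unif_exp; have [U0|U_gt0] := posnP #|U|.
  by rewrite (cards0_eq U0) big_set0 mul0r.
by rewrite pmulr_lge0 // invr_gt0 ltr0n.
Qed.

End UniformSets.

Section Submodular.
Variables (R : realFieldType) (T : finType) (f : {set T} -> R).

Lemma marg_setU (S A B : {set T}) : marg f S (A :|: B) = marg f S A + marg f (S :|: A) B.
Proof. rewrite /marg setUA; ring. Qed.

Hypothesis f_sub : submodular f.

Lemma marg1_antimono (A B : {set T}) a : A \subset B -> a \notin B :\: A ->
  marg f B [set a] <= marg f A [set a].
Proof.
move=> AB aBA; rewrite /marg; case: (boolP (a \in A)) => aA.
  have aB : a \in B := subsetP AB a aA.
  by rewrite !(setUidPl _ : _ :|: [set a] = _) ?sub1set // !subrr.
have aB : a \notin B by move: aBA; rewrite inE aA.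
have := f_sub (A :|: [set a]) B.
rewrite setUAC (setUidPr AB) setIUl (setIidPl AB) (_ : [set a] :&: B = set0) ?setU0.
  by move=> ?; lra.
by apply/setP => x; rewrite !inE; case: eqP => // ->; rewrite (negbTE aB).
Qed.

Lemma marg_ge_sum_marg1 (W Q : {set T}) (Y : T -> {set T}) :
  (forall q, q \in Q -> W :|: Q :\ q \subset Y q) ->
  (forall q, q \in Q -> q \notin Y q :\: W) ->
  \sum_(q in Q) marg f (Y q) [set q] <= marg f W Q.
Proof.
move Qn: #|Q| => n; elim: n Q Qn => [|n IH] Q Qn YQ YW.
  by rewrite (cards0_eq Qn) big_set0 /marg setU0 subrr.
have [q qQ] : {q | q \in Q} by apply/sigW/card_gt0P; rewrite Qn.
rewrite (big_setD1 q qQ) /= addrC.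
have -> : marg f W Q = marg f W (Q :\ q) + marg f (W :|: Q :\ q) [set q].
  by rewrite -marg_setU setUC setD1K.
apply: lerD.
  apply: IH => [|q' /setD1P [_ q'Q]|q' /setD1P [_ q'Q]]; last exact: YW.
    by move: Qn; rewrite (cardsD1 q) qQ => -[].
  by apply: subset_trans (YQ q' q'Q); apply/setUS/setSD/subD1set.
apply: marg1_antimono; first exact: YQ.
by apply: contra (YW q qQ); rewrite !inE !negb_or => /andP [/andP [-> _] ->].
Qed.

Lemma marg_le_sum_cover (F : {set {set T}}) (M : R) (S Tset : {set T}) :
  (forall t, t \in Tset -> \sum_(Rs in F | t \in Rs) 1 = M) ->
  M * marg f S Tset <= \sum_(Rs in F) marg f S (Rs :&: Tset).
Proof.
move Tn: #|Tset| => n; elim: n Tset Tn => [|n IH] Tset Tn cover.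
  by rewrite (cards0_eq Tn) /marg big1 => [|Rs _]; rewrite ?setI0 setU0 subrr ?mulr0.
have [t tT] : {t | t \in Tset} by apply/sigW/card_gt0P; rewrite Tn.
have Tn' : #|Tset :\ t| = n by move: Tn; rewrite (cardsD1 t) tT => -[].
have split_Rs (Rs : {set T}) :
  marg f S (Rs :&: (Tset :\ t)) + (t \in Rs)%:R * marg f (S :|: Tset :\ t) [set t]
  <= marg f S (Rs :&: Tset).
  case: (boolP (t \in Rs)) => tR; last first.
    rewrite mul0r addr0 (_ : Rs :&: Tset = Rs :&: (Tset :\ t)) //.
    by apply/setP => x; rewrite !inE; case: eqP => // ->; rewrite (negbTE tR).
  rewrite mul1r -[in X in _ <= X](setD1K tT) setIUr.
  rewrite (setIidPr _ : Rs :&: [set t] = _) ?sub1set //.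
  rewrite [[set t] :|: _]setUC marg_setU lerD2l; apply: marg1_antimono.
    by apply/setUS/subsetIr.
  by rewrite !inE !negb_or eqxx /= andbF orbF andbT andNb.
apply: le_trans (ler_sum _ (fun Rs _ => split_Rs Rs)).
rewrite big_split /= -mulr_suml.
have -> : \sum_(Rs in F) (t \in Rs)%:R = M :> R.
  by rewrite -(cover t tT) big_mkcondr; apply: eq_bigr => Rs _; case: (t \in Rs).
rewrite -{1}(setD1K tT) setUC marg_setU mulrDr lerD2r.
by apply: IH => // t' /setD1P [_ /cover].
Qed.

Lemma sum_marg_le_Xplus (S X Tset : {set T}) s :
  (s <= #|X|)%N -> Tset \subset Xplus f S X s ->
  \sum_(Rs in usets X s) marg f S (Rs :&: Tset) <=
  \sum_(Rs in usets X s) marg f S (Rs :&: Xplus f S X s).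
Proof.
set Xp := Xplus f S X s; set D := Xp :\: Tset => sX TXp.
have extend (Rs : {set T}) :
  marg f S (Rs :&: Tset) + \sum_(q in Rs :&: D) marg f (S :|: Rs :\ q) [set q]
  <= marg f S (Rs :&: Xp).
  rewrite -(setID Xp Tset) (setIidPr TXp) setIUr marg_setU lerD2l.
  apply: marg_ge_sum_marg1 => q.
    rewrite !inE => /and3P [qR qT _]; rewrite -setUA setUS //.
    apply/subsetP => x /setUP [/setIP [xR xT] | /setD1P [xq /setIP [xR _]]]; apply/setD1P => //.
    by split=> //; apply: contraNneq qT => <-.
  by rewrite !inE eqxx orbF /= => _; case: (q \in S); rewrite ?andbF.
have Delta_ge0 :
  0 <= \sum_(Rs in usets X s) \sum_(q in Rs :&: D) marg f (S :|: Rs :\ q) [set q].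
  rewrite (exchange_big_dep (mem D)) /=; last by move=> Rs q _; rewrite inE => /andP [].
  apply: sumr_ge0 => q qD; have /setDP [qXp _] := qD; have /setIdP [qX Delta_q] := qXp.
  rewrite (eq_bigl (fun Rs => (Rs \in usets X s) && (q \in Rs))) => [|Rs]; last first.
    by rewrite in_setI qD andbT.
  apply: (usets_mem_sum_ge0 (H := fun B => marg f (S :|: B) [set q])) => // [Rs b qR bR |].
    apply: marg1_antimono; first exact/setUS/subD1set.
    by rewrite !inE (negbTE qR) !andbF !orbF andNb.
  by rewrite -ge0_unif_exp.
apply: le_trans (ler_sum _ (fun Rs _ => extend Rs)).
by rewrite [X in _ <= X]big_split /= lerDl.
Qed.

End Submodular.

Unset Implicit Arguments. Set Strict Implicit.
Theorem lemma7 (R : realFieldType) (T : finType) (f : {set T} -> R)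
    (k s : nat) (r : R) (S X Tset : {set T}) :
  nonneg_setfun f -> submodular f ->
  (1 <= r) -> (0 < s)%N -> k%:R / r = s%:R ->
  #|X| = k ->
  Tset \subset Xplus f S X s ->
  marg f S Tset / r <= unif_exp X s (fun Rs => marg f S (Rs :&: Xplus f S X s)).
Proof.
move=> _ f_sub r_ge1 s_gt0 k_eq cardX TXp.
have r_gt0 : 0 < r := lt_le_trans ltr01 r_ge1.
have k_eq' : k%:R = s%:R * r :> R by rewrite -k_eq divfK ?gt_eqF.
have sX : (s <= #|X|)%N by rewrite cardX -(ler_nat R) k_eq' ler_peMr ?ler0n.
have TX : Tset \subset X by apply: subset_trans TXp _; apply/subsetP => x /setIdP [].
set U := usets X s; set M : R := #|U|%:R * s%:R / #|X|%:R.
have cover := marg_le_sum_cover f_sub S (fun t tT => usets_count_mem R s (subsetP TX t tT)).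
have main := le_trans cover (sum_marg_le_Xplus f_sub sX TXp).
have U_gt0 : (0 < #|U|)%N by rewrite /U /usets cards_draws bin_gt0.
have -> : marg f S Tset / r = M * marg f S Tset / #|U|%:R.
  rewrite /M cardX k_eq'; field.
  by rewrite !pnatr_eq0 -!lt0n s_gt0 U_gt0 gt_eqF.
by apply: (ler_wpM2r _ main); rewrite invr_ge0 ler0n.
Qed.
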